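(* On the triangle graph on $\{0,1,2\}$ over $\mathbb{F}_2$, let $\nabla$ be the curved QLC determined by $\nabla e^+=e^-\otimes e^-$, $\nabla e^-=e^+\otimes e^+$, viewed as a map $P(\mathrm{Arr})\to P(\mathrm{Arr}^{(2)})$. Define its de Morgan dual connection by $\bar\nabla\omega=\mathrm{Arr}^{(2)}\setminus\nabla(\mathrm{Arr}\setminus\omega)$. Then $\bar\nabla\omega=\nabla\omega\oplus g$ for all $\omega\subseteq\mathrm{Arr}$, where $g=\{0\to1\to0,\ 0\to2\to0,\ 1\to0\to1,\ 1\to2\to1,\ 2\to0\to2,\ 2\to1\to2\}$ is the quantum metric.
   Context: $A=\mathbb{F}_2(\{0,1,2\})$; $\mathrm{Arr}=\{i\to j: i\ne j\}$ (all six arrows), $\mathrm{Arr}^{(2)}$ the set of 2-step paths $x\to y\to z$ along arrows. Over $\mathbb{F}_2$, 1-forms are identified with subsets of $\mathrm{Arr}$ (sum = symmetric difference $\oplus$) and $\Omega^1\otimes_A\Omega^1$ with subsets of $\mathrm{Arr}^{(2)}$, where $(x\to y)\otimes(y'\to z)$ is the path $x\to y\to z$ if $y=y'$ and $0=\emptyset$ otherwise. The bimodule structure is $f\cdot(x\to y)\cdot h=f(x)h(y)(x\to y)$ and ${\rm d} f=\sum_{x\to y}(f(y)+f(x))x\to y$. $e^+=\{0\to1,1\to2,2\to0\}$, $e^-=\{1\to0,2\to1,0\to2\}$. The connection is extended from $e^\pm$ to all 1-forms by $\nabla(f\omega)={\rm d} f\otimes\omega+f\nabla\omega$ (it is additive).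 *)

(* F_2 is modelled by bool with xor (addb); subsets by {set _}. *)
From mathcomp Require Import all_boot.
Set Implicit Arguments. Unset Strict Implicit. Unset Printing Implicit Defensive.

Definition V := 'I_3.
Definition arrow := {p : V * V | p.1 != p.2}.
Definition src (a : arrow) : V := (val a).1.
Definition tgt (a : arrow) : V := (val a).2.
Definition path2 := {t : V * V * V | (t.1.1 != t.1.2) && (t.1.2 != t.2)}.
Definition p0 (p : path2) : V := (val p).1.1.
Definition p1 (p : path2) : V := (val p).1.2.
Definition p2 (p : path2) : V := (val p).2.

Definition fn := V -> bool.

(* sum over F_2 = symmetric difference *)
Definition symdiff (T : finType) (A B : {set T}) : {set T} := (A :\: B) :|: (B :\: A).

Definition inA (w : {set arrow}) (x y : V) : bool :=
  [exists a in w, (src a == x) && (tgt a == y)].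

(* (x->y) (x) (y'->z) = x->y->z if y = y', else 0; extended bilinearly *)
Definition tens (w u : {set arrow}) : {set path2} :=
  [set p : path2 | inA w (p0 p) (p1 p) && inA u (p1 p) (p2 p)].

Definition lact1 (f : fn) (w : {set arrow}) : {set arrow} := [set a in w | f (src a)].
Definition lact2 (f : fn) (T : {set path2}) : {set path2} := [set p in T | f (p0 p)].

Definition dA (f : fn) : {set arrow} := [set a : arrow | f (tgt a) (+) f (src a)].

Definition eplus : {set arrow} :=
  [set a : arrow | (nat_of_ord (src a), nat_of_ord (tgt a)) \in [:: (0,1); (1,2); (2,0)]].
Definition eminus : {set arrow} :=
  [set a : arrow | (nat_of_ord (src a), nat_of_ord (tgt a)) \in [:: (1,0); (2,1); (0,2)]].

Definition nabla_eplus : {set path2} := tens eminus eminus.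
Definition nabla_eminus : {set path2} := tens eplus eplus.

(* coefficients of a 1-form w = f.e^+ + h.e^- (e^+, e^- partition Arr and
   each contains exactly one arrow out of every vertex) *)
Definition coef (e w : {set arrow}) : fn := fun x => [exists a in w, (a \in e) && (src a == x)].

(* Leibniz extension: nabla (f e) = d f (x) e + f nabla e, and additivity *)
Definition nabla (w : {set arrow}) : {set path2} :=
  symdiff
    (symdiff (tens (dA (coef eplus w)) eplus) (lact2 (coef eplus w) nabla_eplus))
    (symdiff (tens (dA (coef eminus w)) eminus) (lact2 (coef eminus w) nabla_eminus)).

Definition nablabar (w : {set arrow}) : {set path2} := ~: nabla (~: w).

Definition gmetric : {set path2} := [set p : path2 | p0 p == p2 p].

(* Complementing a 1-form over F_2 adds 1 to both of its coefficients on the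
   basis e^+, e^-. Since d kills constants, the Leibniz extension then gives
   nabla (Arr \ w) = nabla w + nabla e^+ + nabla e^-, so the de Morgan dual
   differs from nabla by the constant Arr^(2) + e^- (x) e^- + e^+ (x) e^+.
   On the triangle a path x -> y -> z with x <> z runs along three distinct
   vertices, hence along two arrows of the same orientation, so this constant
   is exactly the set of paths x -> y -> x, i.e. the metric g. *)
From mathcomp Require Import all_boot.
Set Implicit Arguments. Unset Strict Implicit. Unset Printing Implicit Defensive.

Lemma in_symdiff (T : finType) (A B : {set T}) x :
  (x \in symdiff A B) = (x \in A) (+) (x \in B).
Proof. by rewrite !inE; case: (x \in A); case: (x \in B). Qed.

Lemma setC_symdiff_setC (T : finType) (A B : {set T}) :
  ~: symdiff A (~: B) = symdiff A B.
Proof.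
by apply/setP => x; rewrite inE !in_symdiff inE; case: (x \in A); case: (x \in B).
Qed.

Lemma p0_neq_p1 (p : path2) : p0 p != p1 p.
Proof. by case/andP: (valP p). Qed.

Lemma p1_neq_p2 (p : path2) : p1 p != p2 p.
Proof. by case/andP: (valP p). Qed.

Definition arrow_of (x y : V) (xy : x != y) : arrow :=
  exist (fun p : V * V => p.1 != p.2) (x, y) xy.

Lemma inA_arrow_of w x y (xy : x != y) : inA w x y = (arrow_of xy \in w).
Proof.
apply/existsP/idP => [[a /andP[aw /andP[/eqP ax /eqP ay]]]|xyw].
  suff -> : arrow_of xy = a by [].
  by apply: val_inj; rewrite /= -ax -ay; case: a {aw ax ay} => [[]].
by exists (arrow_of xy); rewrite xyw /src /tgt !eqxx.
Qed.

Lemma inA_setC w x y : x != y -> inA (~: w) x y = ~~ inA w x y.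
Proof. by move=> xy; rewrite !(inA_arrow_of _ xy) inE. Qed.

Lemma dA_negb (f h : fn) : (forall x, h x = ~~ f x) -> dA h = dA f.
Proof. by move=> hE; apply/setP => a; rewrite !inE !hE addbN addNb negbK. Qed.

Lemma lact2_negb (f h : fn) (T : {set path2}) :
  (forall x, h x = ~~ f x) -> lact2 h T = symdiff T (lact2 f T).
Proof.
by move=> hE; apply/setP => p; rewrite in_symdiff !inE hE; case: (p \in T); case: (f _).
Qed.

Definition arrow_graph (s : V -> V) : {set arrow} := [set a | tgt a == s (src a)].

Lemma inA_arrow_graph s x y : x != y -> inA (arrow_graph s) x y = (y == s x).
Proof. by move=> xy; rewrite (inA_arrow_of _ xy) inE. Qed.

Lemma coef_arrow_graph s w x : coef (arrow_graph s) w x = inA w x (s x).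
Proof.
apply: eq_existsb => a; rewrite inE.
by case: (src a =P x) => [->|]; rewrite ?andbT ?andbF // andbC.
Qed.

Lemma coef_arrow_graph_setC s w x :
  s x != x -> coef (arrow_graph s) (~: w) x = ~~ coef (arrow_graph s) w x.
Proof. by rewrite eq_sym => xsx; rewrite !coef_arrow_graph inA_setC. Qed.

Lemma eplusE : eplus = arrow_graph (@ordS 3).
Proof.
apply/setP => -[[x y] xy]; rewrite !inE /src /tgt /=.
by case: x xy => [[|[|[|]]] ?] //; case: y => [[|[|[|]]] ?].
Qed.

Lemma eminusE : eminus = arrow_graph (@ord_pred 3).
Proof.
apply/setP => -[[x y] xy]; rewrite !inE /src /tgt /=.
by case: x xy => [[|[|[|]]] ?] //; case: y => [[|[|[|]]] ?].
Qed.

Lemma ordS_neq (x : V) : ordS x != x.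
Proof. by case: x => [[|[|[|]]] ?]. Qed.

Lemma ord_pred_neq (x : V) : ord_pred x != x.
Proof. by case: x => [[|[|[|]]] ?]. Qed.

Lemma nabla_setC w :
  nabla (~: w) = symdiff (nabla w) (symdiff nabla_eplus nabla_eminus).
Proof.
have cplus x := coef_arrow_graph_setC w (ordS_neq x).
have cminus x := coef_arrow_graph_setC w (ord_pred_neq x).
rewrite /nabla eplusE eminusE (dA_negb cplus) (dA_negb cminus).
rewrite (lact2_negb _ cplus) (lact2_negb _ cminus).
apply/setP => p; rewrite !in_symdiff.
by do 6 case: (p \in _).
Qed.

Lemma symdiff_nabla_generators : symdiff nabla_eplus nabla_eminus = ~: gmetric.
Proof.
apply/setP => p; rewrite in_symdiff !inE eplusE eminusE.
rewrite !inA_arrow_graph ?p0_neq_p1 ?p1_neq_p2 //.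
case: p => -[[x y] z] xyz; rewrite /p0 /p1 /p2 /=; case/andP: xyz => /=.
by case: x => [[|[|[|]]] ?] //; case: y => [[|[|[|]]] ?] //; case: z => [[|[|[|]]] ?].
Qed.

Theorem lemma4p9 (w : {set arrow}) : nablabar w = symdiff (nabla w) gmetric.
Proof.
by rewrite /nablabar nabla_setC symdiff_nabla_generators setC_symdiff_setC.
Qed.
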